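(* Let $d\ge2$, let $\mathcal{S}$ be a simple-minded system of $A_n^{dn}$-$\underline{\mathrm{mod}}$ with associated permutation $\sigma$, let $i\in\underline{n}$, and let $s_i$ be the size of the $\sigma$-orbit of $i$. For $0\le j\le s_i-1$ let $M_{ij}\in\mathcal{S}$ be the object with top $S_{\sigma^j(i)}$ and socle $S_{\sigma^{j+1}(i)}$, and write $M_{ij}=M^{\sigma^j(i)}_{\sigma^{j+1}(i),l_{ij}}$ with $l_{ij}\ge0$. Then there is at most one $j\in\{0,\dots,s_i-1\}$ with $l_{ij}=0$.
   Context: $A_n^{dn}=kQ/I$ ($k$ algebraically closed), $Q$ the cyclic quiver with vertices $1,\dots,n$ and arrows $i\to i+1$, $n\to1$, $I$ generated by all paths of length $dn+1$. $M^a_{b,t}$ is the indecomposable (uniserial) module with top $S_a$, socle $S_b$, and $S_a$ occurring $t+1$ times as composition factor. $\underline{\mathrm{Hom}}$ is Hom modulo maps factoring through projectives. A simple-minded system (sms) is a family $\mathcal{S}$ of indecomposable non-projective modules with $\underline{\mathrm{Hom}}(S,T)=0$ for distinct $S,T\in\mathcal{S}$, $\underline{\mathrm{Hom}}(S,S)\cong k$, and such that each indecomposable non-projective $X$ has $\underline{\mathrm{Hom}}(X,S)\neq0$ for some $S\in\mathcal{S}$. For an sms each simple is the top of exactly one and the socle of exactly one object; the associated permutation $\sigma$ of $\underline{n}=\{1,\dots,n\}$ is $\sigma(a)=b$ if some object has top $S_a$ and socle $S_b$. *)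

From mathcomp Require Import all_boot all_order all_algebra all_fingroup.
Unset Printing Implicit Defensive.
Import GRing.Theory.
Local Open Scope ring_scope.

(* Modules over A_n^{dn} = kQ/I (cyclic quiver 1..n, arrows v -> v+1, paths of
   length dn+1 are zero) are realised as representations.  Vertices are
   labelled 0..n-1 (mod n).  The uniserial module with top S_a and length l
   has basis e_0,...,e_{l-1}, e_k lying at vertex (a+k) mod n, and the arrows
   act (on row vectors) by the shift e_k |-> e_{k+1}, e_{l-1} |-> 0. *)

Definition shiftmx (K : fieldType) (l : nat) : 'M[K]_l :=
  \matrix_(i, j) ((nat_of_ord j == (nat_of_ord i).+1)%:R).

(* F : 'M_(l,m) (acting on row vectors) is a module homomorphism from the
   uniserial module (top a, length l) to the uniserial module (top c, length m):
   it preserves the vertex decomposition and commutes with the arrows. *)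
Definition is_hom {K : fieldType} (n : nat) (a l c m : nat) (F : 'M[K]_(l, m)) : Prop :=
  (forall (i : 'I_l) (j : 'I_m), F i j != 0 -> ((a + i) %% n = (c + j) %% n)%N) /\
  shiftmx K l *m F = F *m shiftmx K m.

(* F factors through a projective module: through a finite direct sum of
   indecomposable projectives P_c (= uniserial of top c and length dn+1). *)
Definition factors_proj {K : fieldType} (n d : nat) (a l c m : nat)
    (F : 'M[K]_(l, m)) : Prop :=
  exists s : seq ('I_n * 'M[K]_(l, (d * n)%N.+1) * 'M[K]_((d * n)%N.+1, m)),
    (forall x, x \in s ->
        is_hom n a l x.1.1 (d * n)%N.+1 x.1.2 /\ is_hom n x.1.1 (d * n)%N.+1 c m x.2)
    /\ F = \sum_(x <- s) (x.1.2 *m x.2).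

(* Indecomposable non-projective modules up to isomorphism: uniserial modules
   with top a : 'I_n and length L = x.2 + 1 with 1 <= L <= dn. *)
Definition lab (n d : nat) := ('I_n * 'I_(d * n)%N)%type.

Definition top {n d : nat} (X : lab n d) : nat := X.1.
Definition socle {n d : nat} (X : lab n d) : nat := ((X.1 + X.2) %% n)%N.
(* X = M^a_{b,t}: S_a occurs t+1 times as composition factor *)
Definition tpar {n d : nat} (X : lab n d) : nat := (X.2 %/ n)%N.

Definition stHom_zero (K : fieldType) {n d : nat} (X Y : lab n d) : Prop :=
  forall F : 'M[K]_(X.2.+1, Y.2.+1),
    is_hom n X.1 X.2.+1 Y.1 Y.2.+1 F -> factors_proj n d X.1 X.2.+1 Y.1 Y.2.+1 F.

Definition stHom_is_k (K : fieldType) {n d : nat} (X Y : lab n d) : Prop :=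
  exists F : 'M[K]_(X.2.+1, Y.2.+1),
    [/\ is_hom n X.1 X.2.+1 Y.1 Y.2.+1 F,
        ~ factors_proj n d X.1 X.2.+1 Y.1 Y.2.+1 F &
        forall G : 'M[K]_(X.2.+1, Y.2.+1), is_hom n X.1 X.2.+1 Y.1 Y.2.+1 G ->
          exists c : K, factors_proj n d X.1 X.2.+1 Y.1 Y.2.+1 (G - c *: F)].

Definition is_sms (K : fieldType) {n d : nat} (S : {set lab n d}) : Prop :=
  [/\ (forall X Y, X \in S -> Y \in S -> X != Y -> stHom_zero K X Y),
      (forall X, X \in S -> stHom_is_k K X X) &
      (forall Z : lab n d, exists2 X, X \in S & ~ stHom_zero K Z X)].

From mathcomp Require Import all_boot all_order all_algebra all_fingroup.
From mathcomp Require Import zify.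

Import GRing.Theory.

(* Unroll the cyclic quiver, so that the uniserial module with top a and length
   s + 1 occupies the positions a, ..., a + s. Sending the top of X to the r-th
   composition factor of Y gives a homomorphism as soon as the positions agree
   modulo n and X reaches down to the socle of Y, and a map through the
   projectives (of length dn + 1) can only do so when r + s_X >= dn; so for
   r + s_X < dn this map is stably nonzero.
   Let two short objects (t = 0, i.e. length at most n) of the sms lie on one
   sigma-orbit and follow the orbit from the first to the next short one.
   Measured from the top of the first, every long object in between has to reach
   a full turn dn beyond it, since otherwise it maps stably onto the first one;
   hence the relative positions of the tops strictly decrease. The end of the
   last short object then falls inside one of these long objects shifted back by
   a turn, and the resulting stably nonzero map between two distinct objects of
   the sms contradicts orthogonality. *)

Section ShiftIntertwiners.
Context {K : fieldType}.
Local Open Scope ring_scope.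

Lemma shiftmx_mul_succ {l m} (A : 'M[K]_(l, m)) (i i' : 'I_l) j :
  i' = i.+1 :> nat -> (shiftmx K l *m A) i j = A i' j.
Proof.
move=> ei'; rewrite mxE (bigD1 i') //= !mxE ei' eqxx mul1r big1 ?addr0 // => k ne_ki'.
by rewrite mxE -ei' val_eqE (negbTE ne_ki') mul0r.
Qed.

Lemma shiftmx_mul_last {l m} (A : 'M[K]_(l, m)) (i : 'I_l) j :
  i.+1 = l -> (shiftmx K l *m A) i j = 0.
Proof.
move=> ei; rewrite mxE big1 // => k _.
by rewrite mxE ltn_eqF ?mul0r // ei.
Qed.

Lemma mul_shiftmx_succ {l m} (A : 'M[K]_(l, m)) i (j j' : 'I_m) :
  j = j'.+1 :> nat -> (A *m shiftmx K m) i j = A i j'.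
Proof.
move=> ej; rewrite mxE (bigD1 j') //= !mxE ej eqxx mulr1 big1 ?addr0 // => k ne_kj'.
by rewrite mxE ej eqSS val_eqE eq_sym (negbTE ne_kj') mulr0.
Qed.

Lemma mul_shiftmx_0 {l m} (A : 'M[K]_(l, m)) i (j : 'I_m) :
  j = 0%N :> nat -> (A *m shiftmx K m) i j = 0.
Proof. by move=> ej; rewrite mxE big1 // => k _; rewrite mxE ej mulr0. Qed.

Lemma shift_intertwiner_lower {l m} (A : 'M[K]_(l, m)) :
  shiftmx K l *m A = A *m shiftmx K m ->
  forall (i : 'I_l) (j : 'I_m), (j < i)%N -> A i j = 0.
Proof.
move=> comm i [j jm]; elim: j jm i => [|j IH] jm i /= lt_ji; have := ltn_ord i.
  move=> il; have pi : (i.-1 < l)%N by lia.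
  have := congr1 (fun B : 'M[K]_(l, m) => B (Ordinal pi) (Ordinal jm)) comm.
  by rewrite (shiftmx_mul_succ _ _ i) ?mul_shiftmx_0 //=; lia.
move=> il; have pi : (i.-1 < l)%N by lia.
have pj : (j < m)%N by lia.
have := congr1 (fun B : 'M[K]_(l, m) => B (Ordinal pi) (Ordinal jm)) comm.
rewrite (shiftmx_mul_succ _ _ i) /=; last by lia.
by rewrite (mul_shiftmx_succ _ _ _ (Ordinal pj)) // => ->; apply: IH => /=; lia.
Qed.

Lemma shift_intertwiner_upper {l m} (A : 'M[K]_(l, m)) :
  shiftmx K l *m A = A *m shiftmx K m ->
  forall (i : 'I_l) (j : 'I_m), (l - i < m - j)%N -> A i j = 0.
Proof.
move=> comm i j; move def_e: (l - i)%N => e.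
elim: e i j def_e => [|e IH] i j def_e lt_em; have := ltn_ord i; have := ltn_ord j; first lia.
move=> jm il; have sj : (j.+1 < m)%N by lia.
have := congr1 (fun B : 'M[K]_(l, m) => B i (Ordinal sj)) comm.
rewrite (mul_shiftmx_succ _ _ _ j) // => <-.
case: (ltnP i.+1 l) => [si | ?]; last by rewrite shiftmx_mul_last //; lia.
by rewrite (shiftmx_mul_succ _ _ (Ordinal si)) // IH //=; lia.
Qed.

Lemma factors_proj_top_row {n d a l c m} (F : 'M[K]_(l.+1, m)) :
  factors_proj n d a l.+1 c m F ->
  forall j : 'I_m, (j + l < d * n)%N -> F ord0 j = 0.
Proof.
case=> s [s_hom ->] j lt_jD; rewrite summxE big1_seq // => x /s_hom [[_ hG] [_ hH]].
rewrite mxE big1 // => k _; have := ltn_ord k.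
case: (ltnP (k + l) (d * n)) => kl kD.
  by rewrite (shift_intertwiner_upper _ hG) ?mul0r //=; lia.
by rewrite (shift_intertwiner_lower _ hH) ?mulr0 //; lia.
Qed.

End ShiftIntertwiners.

(* The map sending the top of [X] to the [r]-th basis vector of [Y]: the first
   two conditions make it a homomorphism, the last keeps it off the projectives. *)
Definition stable_window {n d : nat} (X Y : lab n d) (r : nat) : Prop :=
  [/\ (top Y + r) %% n = top X, r <= Y.2 <= r + X.2 & r + X.2 < d * n]%N.

Lemma stable_window_stHom_neq0 (K : fieldType) {n d} {X Y : lab n d} {r} :
  stable_window X Y r -> ~ stHom_zero K X Y.
Proof.
case=> top_r /andP[r_le le_r] r_lt zeroXY.
pose F : 'M[K]_(X.2.+1, Y.2.+1) := (\matrix_(i, j) ((j == i + r :> nat)%N%:R))%R.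
have SF i j : (shiftmx K _ *m F)%R i j = (j == i.+1 + r :> nat)%:R%R.
  case: (ltnP i.+1 X.2.+1) => [si | ?].
    by rewrite (shiftmx_mul_succ _ _ (Ordinal si)) // mxE.
  rewrite shiftmx_mul_last; last by have := ltn_ord i; lia.
  by case: eqP => // ej; have := ltn_ord j; lia.
have FS i (j : 'I_Y.2.+1) : (F *m shiftmx K _)%R i j = (j == i.+1 + r :> nat)%:R%R.
  case ej: (nat_of_ord j) => [|j']; first by rewrite mul_shiftmx_0.
  have j'Y : (j' < Y.2.+1)%N by have := ltn_ord j; lia.
  by rewrite (mul_shiftmx_succ _ _ _ (Ordinal j'Y)) // mxE.
have F_hom : is_hom n X.1 X.2.+1 Y.1 Y.2.+1 F.
  split; last by apply/matrixP => i j; rewrite SF FS.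
  move=> i j; rewrite mxE; have [-> _ | ne] := eqVneq (nat_of_ord j) (i + r)%N.
    by rewrite /top in top_r; rewrite -top_r modnDml addnA addnAC.
  by rewrite eqxx.
have rY : (r < Y.2.+1)%N by lia.
have := factors_proj_top_row _ (zeroXY F F_hom) (Ordinal rY).
by rewrite mxE add0n eqxx => /(_ r_lt)/eqP; rewrite oner_eq0.
Qed.

Lemma nat_crossing (f : nat -> nat) x lo hi :
  lo <= hi -> f hi <= x < f lo -> exists2 k, lo <= k < hi & f k.+1 <= x < f k.
Proof.
elim: hi => [|hi IH] le_lo /andP[le_x lt_x].
  by move: le_lo lt_x; rewrite leqn0 => /eqP->; rewrite ltnNge le_x.
have [eq_lo | le_hi] : lo = hi.+1 \/ lo <= hi by lia.
  by rewrite eq_lo ltnNge le_x in lt_x.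
case: (leqP (f hi) x) => [fhi_le | lt_fhi]; last first.
  by exists hi; rewrite ?le_hi ?ltnSn ?le_x.
case: (IH le_hi) => [|k /andP[lo_k k_hi] fk]; first by rewrite fhi_le.
by exists k; rewrite // lo_k ltnS ltnW.
Qed.

Section ChainWithShortEnds.
Context {n d : nat} {X : nat -> lab n d} {m : nat}.
Hypotheses (d_ge2 : 2 <= d) (m_gt0 : 0 < m).
Hypothesis chain : forall k, top (X k.+1) = socle (X k).
Hypotheses (short_first : (X 0).2 < n) (short_last : (X m).2 < n).
Hypothesis long_inner : forall k, 0 < k < m -> n <= (X k).2.
Hypothesis no_window : forall u v r, v < u <= m -> ~ stable_window (X u) (X v) r.

Let P := top (X 0).
Let c : nat := (X 0).2.
Let D := d * n.
Let offset k := (top (X k) + (n - P)) %% n.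

Let len_lt k : (X k).2 < D. Proof. exact: ltn_ord. Qed.
Let P_lt : P < n. Proof. exact: ltn_ord. Qed.
Let c_lt : c < n. Proof. exact: short_first. Qed.
Let D_ge : 2 * n <= D. Proof. by rewrite leq_mul2r d_ge2 orbT. Qed.

Lemma offset_lt k : offset k < n.
Proof. by rewrite ltn_pmod //; lia. Qed.

Lemma top_offset k : top (X k) = (P + offset k) %% n.
Proof.
rewrite modnDmr addnCA subnKC; last exact: ltnW.
by rewrite modnDr modn_small //; apply: ltn_ord.
Qed.

Lemma offset_succ k : offset k.+1 = (offset k + (X k).2) %% n.
Proof. by rewrite /offset chain /socle modnDml modnDml addnAC. Qed.

Lemma offset1 : offset 1 = c.
Proof. by rewrite offset_succ /offset -/P subnKC ?modnn ?modn_small //; apply: ltnW. Qed.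

Lemma window_into_first k :
  offset k <= c <= offset k + (X k).2 -> offset k + (X k).2 < D ->
  stable_window (X k) (X 0) (offset k).
Proof. by move=> le_c lt_D; split; rewrite // -top_offset. Qed.

Lemma offset_wrap k :
  0 < k < m -> offset k <= c -> offset k.+1 + D = offset k + (X k).2.
Proof.
move=> k_in le_c; have s_ge := long_inner _ k_in; have s_lt := len_lt k.
have reach : D <= offset k + (X k).2.
  rewrite leqNgt; apply/negP => lt_D; apply: (no_window k 0 (offset k)); first lia.
  by apply: window_into_first => //; lia.
have wrap : (offset k + (X k).2) %% n = offset k + (X k).2 - D.
  by rewrite -{1}(subnK reach) /D addnC modnMDl modn_small //; lia.
by rewrite offset_succ wrap subnK.
Qed.

Lemma offset_le_first_len k : 0 < k <= m -> offset k <= c.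
Proof.
elim: k => [|k IH] // /andP[_ k_le]; case: k IH k_le => [_ _ | k IH k_le].
  by rewrite offset1.
have le_c : offset k.+1 <= c by apply: IH; lia.
have step : offset k.+2 + D = offset k.+1 + (X k.+1).2.
  by apply: offset_wrap => //; lia.
have := len_lt k.+1; lia.
Qed.

Lemma offset_step k : 0 < k < m -> offset k.+1 + D = offset k + (X k).2.
Proof. by move=> k_in; apply: offset_wrap => //; apply: offset_le_first_len; lia. Qed.

Lemma offset_nonincr k l : 0 < k <= l -> l <= m -> offset l <= offset k.
Proof.
elim: l => [|l IH] k_le l_le; first lia.
have [-> // | k_le_l] : k = l.+1 \/ k <= l by lia.
have le_lk : offset l <= offset k by apply: IH; lia.
have step : offset l.+1 + D = offset l + (X l).2 by apply: offset_step; lia.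
have := len_lt l; lia.
Qed.

Lemma last_ends_before_first : offset m + (X m).2 < c.
Proof.
rewrite ltnNge; apply/negP => reach.
have le_c : offset m <= c by apply: offset_le_first_len; lia.
apply: (no_window m 0 (offset m)); first lia.
by apply: window_into_first; lia.
Qed.

Lemma chain_with_short_ends_has_window : False.
Proof.
have [k /andP[k_gt0 k_lt] /andP[le_k lt_k]] :
    exists2 k, 1 <= k < m & offset k.+1 <= offset m + (X m).2 < offset k.
  by apply: nat_crossing => //; rewrite leq_addr offset1 last_ends_before_first.
(* Shifted by one turn [D], [X m] maps onto the tail of [X k]. *)
have step : offset k.+1 + D = offset k + (X k).2 by apply: offset_step; lia.
have mono : offset m <= offset k.+1 by apply: offset_nonincr; lia.
have lt_n := offset_lt k.
apply: (no_window m k (D + offset m - offset k)); first lia.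
split; [|lia..].
rewrite !top_offset modnDml.
have -> : P + offset k + (D + offset m - offset k) = d * n + (P + offset m) by lia.
by rewrite modnMDl.
Qed.

End ChainWithShortEnds.

Lemma tpar_eq0 {n d} (X : lab n d) : (tpar X == 0) = (X.2 < n).
Proof. by rewrite /tpar eqn0Ngt divn_gt0 -?ltnNge //; apply: leq_ltn_trans (ltn_ord X.1). Qed.

Lemma sms_top_inj {K : fieldType} {n d} {S : {set lab n d}} :
  is_sms K S -> {in S &, injective (@top n d)}.
Proof.
case=> orth _ _ X Y XS YS eq_top; case: (eqVneq X Y) => // neXY; exfalso.
wlog le_XY : X Y XS YS eq_top neXY / X.2 <= Y.2.
  move=> wlog; case: (leqP X.2 Y.2) => [|/ltnW]; first exact: wlog.
  by apply: (wlog Y X YS XS (esym eq_top)); rewrite eq_sym.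
apply: (@stable_window_stHom_neq0 K _ _ Y X 0); last by apply: orth; rewrite // eq_sym.
by split; rewrite ?addn0 ?modn_small ?eq_top //; apply: ltn_ord.
Qed.

Lemma permX_porbit_inj {T : finType} {s : {perm T}} {x j1 j2} :
  j1 < #|porbit s x| -> j2 < #|porbit s x| -> (s ^+ j1)%g x = (s ^+ j2)%g x -> j1 = j2.
Proof.
move=> lt1 lt2 eq12; apply/eqP.
rewrite -(nth_uniq x _ _ (uniq_traject_porbit s x)) ?size_traject //.
by rewrite !nth_traject // -!permX eq12.
Qed.

Section SmsOrbit.
Context {K : fieldType} {n d : nat} {S : {set lab n d}} {sigma : {perm 'I_n}}.
Hypotheses (d_ge2 : 2 <= d) (sms_S : is_sms K S).
Hypothesis top_socle : forall a : 'I_n, exists2 X, X \in S & top X = a /\ socle X = sigma a.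

Lemma sms_socle X : X \in S -> socle X = sigma X.1.
Proof.
move=> XS; have [Y YS [tY sY]] := top_socle X.1.
by have eYX := sms_top_inj sms_S _ _ YS XS tY; rewrite -eYX sY eYX.
Qed.

Lemma sms_orbit_chain (a : 'I_n) :
  exists2 Y : nat -> lab n d, forall k, Y k \in S & forall k, top (Y k) = (sigma ^+ k)%g a.
Proof.
have [Z ZS _] := top_socle a.
exists (fun k => odflt Z [pick Y in S | top Y == (sigma ^+ k)%g a :> nat]) => k;
  case: pickP => [Y /andP[YS /eqP] | none] //=.
have [Y YS [tY _]] := top_socle ((sigma ^+ k)%g a).
by move: (none Y); rewrite YS tY eqxx.
Qed.

Lemma sms_orbit_two_short {i : 'I_n} {j1 j2} {X1 X2 : lab n d} :
  j1 < j2 < #|porbit sigma i| -> X1 \in S -> X2 \in S ->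
  top X1 = (sigma ^+ j1)%g i -> top X2 = (sigma ^+ j2)%g i ->
  tpar X1 = 0 -> tpar X2 = 0 -> False.
Proof.
move=> /andP[lt12 lt2] X1S X2S t1 t2 /eqP short1 /eqP short2.
have [Y YS topY0] := sms_orbit_chain ((sigma ^+ j1)%g i).
have topY k : top (Y k) = (sigma ^+ (j1 + k))%g i by rewrite topY0 expgD permM.
have Y_unique k Z : Z \in S -> top Z = top (Y k) -> Y k = Z.
  by move=> ZS eq_top; apply: (sms_top_inj sms_S).
have chain k : top (Y k.+1) = socle (Y k).
  by rewrite sms_socle // topY0 expgSr permM (val_inj (topY0 k)).
have short_gap : (0 < j2 - j1) && ((Y (j2 - j1)).2 < n).
  by rewrite subn_gt0 lt12 -tpar_eq0 (Y_unique _ X2) // topY subnKC 1?ltnW.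
have [|m /andP[m_gt0 short_m] min_m] := ex_minnP (_ : exists k, (0 < k) && ((Y k).2 < n)).
  by exists (j2 - j1).
have m_le := min_m _ short_gap.
apply: (chain_with_short_ends_has_window d_ge2 m_gt0 chain _ short_m).
- by rewrite -tpar_eq0 (Y_unique _ X1) // topY addn0.
- move=> k /andP[k_gt0 k_lt]; rewrite leqNgt; apply/negP => short_k.
  by have := min_m k; rewrite k_gt0 short_k => /(_ isT); rewrite leqNgt k_lt.
- move=> u v r /andP[lt_vu le_um] win; case: sms_S => orth _ _.
  apply: (stable_window_stHom_neq0 K win); apply: orth => //.
  apply/eqP => /(congr1 top); rewrite !topY => /val_inj eq_uv.
  have : j1 + u = j1 + v.
    by apply: (permX_porbit_inj _ _ eq_uv); apply: leq_ltn_trans lt2; lia.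
  lia.
Qed.

End SmsOrbit.

Theorem lemma4p6 (k : closedFieldType) (n d : nat) (hn : (0 < n)%N) (hd : (2 <= d)%N)
  (S : {set lab n d}) (hS : is_sms k S) (sigma : {perm 'I_n})
  (hsigma : forall a : 'I_n, exists2 X, X \in S & top X = a /\ socle X = sigma a)
  (i : 'I_n) :
  forall (j1 j2 : nat) (X1 X2 : lab n d),
    (j1 < #|porbit sigma i|)%N -> (j2 < #|porbit sigma i|)%N ->
    X1 \in S -> X2 \in S ->
    top X1 = (sigma ^+ j1)%g i -> socle X1 = (sigma ^+ j1.+1)%g i ->
    top X2 = (sigma ^+ j2)%g i -> socle X2 = (sigma ^+ j2.+1)%g i ->
    tpar X1 = 0%N -> tpar X2 = 0%N -> j1 = j2.
Proof.
move=> j1 j2 X1 X2 lt1 lt2 X1S X2S t1 _ t2 _ short1 short2.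
case: (ltngtP j1 j2) => // lt12; exfalso.
- by apply: (sms_orbit_two_short hd hS hsigma _ X1S X2S t1 t2 short1 short2); rewrite lt12.
- by apply: (sms_orbit_two_short hd hS hsigma _ X2S X1S t2 t1 short2 short1); rewrite lt12.
Qed.
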